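(* Let $G$ be a graph on $n\ge 3$ vertices, and let $k$ be the maximum number of vertices of an induced subgraph of $G$ that is a threshold graph. Then $\rho_T(G)\le n-k+1$.
   Context: Graphs are finite and simple. A graph $G=(V,E)$ is a threshold graph if there exist weights $w:V\to\mathbb{R}$ and a real number $s$ such that for all distinct $i,j\in V$: $w(i)+w(j)\ge s$ iff $ij\in E$. For $u,v\in(\mathbb{R}\cup\{\infty\})^k$ the min-plus tropical dot product is $u\odot v=\min_i(u_i+v_i)$. A min-plus $k$-tropical dot product representation of $G$ is a map $f:V\to(\mathbb{R}\cup\{\infty\})^k$ with a threshold $t>0$ such that for all distinct $x,y\in V$: $xy\in E$ iff $f(x)\odot f(y)\ge t$. $\rho_T(G)$ is the least $k\ge 1$ for which such a representation exists. *)

From HB Require Import structures.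
From mathcomp Require Import all_boot all_order all_algebra.
From mathcomp Require Import Rstruct.
From Stdlib Require Import Reals.
Set Implicit Arguments. Unset Strict Implicit. Unset Printing Implicit Defensive.
Import Order.TTheory GRing.Theory Num.Theory.
Local Open Scope ring_scope.

Definition simple_graph (T : finType) (e : rel T) : Prop :=
  symmetric e /\ irreflexive e.

Definition is_threshold_on (T : finType) (e : rel T) (S : {set T}) : Prop :=
  exists (w : T -> R) (s : R),
    forall i j, i \in S -> j \in S -> i != j -> ((s <= w i + w j) <-> e i j).

(* R ∪ {∞}: None encodes ∞. *)
Definition xR := option R.

Definition xadd (a b : xR) : xR :=
  match a, b with Some x, Some y => Some (x + y) | _, _ => None end.

Definition xmin (a b : xR) : xR :=
  match a, b with
  | None, _ => b
  | _, None => a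
  | Some x, Some y => Some (Num.min x y)
  end.

Definition tdot (k : nat) (u v : 'I_k -> xR) : xR :=
  \big[xmin/None]_(i < k) xadd (u i) (v i).

Definition xge (a : xR) (t : R) : bool :=
  match a with None => true | Some x => t <= x end.

Definition has_trop_rep (T : finType) (e : rel T) (k : nat) : Prop :=
  exists (f : T -> 'I_k -> xR) (t : R), 0 < t /\
    forall x y, x != y -> (e x y <-> xge (tdot (f x) (f y)) t).

From HB Require Import structures.
From mathcomp Require Import all_boot all_order all_algebra.
From mathcomp Require Import Rstruct.
From Stdlib Require Import Reals.
From mathcomp Require Import lra.
Set Implicit Arguments. Unset Strict Implicit. Unset Printing Implicit Defensive.
Import Order.TTheory GRing.Theory Num.Theory.
Local Open Scope ring_scope.

(* Fix an induced threshold subgraph on a set S of k vertices.  One coordinate carries the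
   threshold structure on S: x in S gets w x - s/2 + 1/2, so that a sum of two
   such entries is >= 1 exactly when w x + w y >= s, and vertices outside S get
   infinity.  Each of the n - k vertices v outside S gets a coordinate of its
   own, where v itself gets -1, its neighbours 2 and its non-neighbours 1: the
   sum is < 1 only on the non-edges at v.  With threshold 1 this represents G
   in dimension n - k + 1. *)

Lemma xge_xmin (a b : xR) (t : R) : xge (xmin a b) t = xge a t && xge b t.
Proof.
case: a => [x|]; case: b => [y|] //=; last by rewrite andbT.
by rewrite le_min.
Qed.

Lemma xge_tdot (k : nat) (u v : 'I_k -> xR) (t : R) :
  xge (tdot u v) t = [forall i, xge (xadd (u i) (v i)) t].
Proof.
rewrite /tdot (big_morph (fun a => xge a t) (id1 := true) (op1 := andb)) //.
- by rewrite big_andE.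
- by move=> a b; rewrite xge_xmin.
Qed.

Section ThresholdExtension.

Variables (T : finType) (e : rel T) (S : {set T}) (w : T -> R) (s : R).
Hypothesis e_sym : symmetric e.
Hypothesis wS : forall i j, i \in S -> j \in S -> i != j ->
  (s <= w i + w j <-> e i j).

Definition threshold_coord (x : T) : xR :=
  if x \in S then Some (w x - s / 2 + 1 / 2) else None.

Definition vertex_coord (v x : T) : xR :=
  Some (if x == v then -1 else if e x v then 2 else 1).

Definition threshold_rep (x : T) (i : 'I_#|~: S|.+1) : xR :=
  if unlift ord0 i is Some j then vertex_coord (enum_val j) x
  else threshold_coord x.

(* The threshold is written [1%:R]: a bare [1] in an argument of type [R] is
   read in Stdlib's [R_scope] as [IZR 1], which [lra] does not handle. *)
Lemma threshold_coordP (x y : T) : x != y ->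
  xge (xadd (threshold_coord x) (threshold_coord y)) 1%:R
  = (x \in S) && (y \in S) ==> e x y.
Proof.
move=> xy; rewrite /threshold_coord.
case: ifP => xS; case: ifP => yS //=.
have -> : (1 <= w x - s / 2 + 1 / 2 + (w y - s / 2 + 1 / 2))
          = (s <= w x + w y) by apply/idP/idP => ?; lra.
by apply/idP/idP => /(wS xS yS xy).
Qed.

Lemma vertex_coordP (v x y : T) : x != y ->
  xge (xadd (vertex_coord v x) (vertex_coord v y)) 1%:R
  = (x == v) || (y == v) ==> e x y.
Proof.
rewrite /=; case: (eqVneq x v) => [->|_]; case: (eqVneq y v) => [->|_] //= _.
- by rewrite [e v y]e_sym; case: (e y v); [| apply: negbTE; rewrite -ltNge]; lra.
- by case: (e x v); [| apply: negbTE; rewrite -ltNge]; lra.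
- by case: (e x v); case: (e y v); lra.
Qed.

Lemma threshold_repP (x y : T) : x != y ->
  e x y = xge (tdot (threshold_rep x) (threshold_rep y)) 1%:R.
Proof.
move=> xy; rewrite xge_tdot; apply/idP/forallP => [exy i | cover].
  rewrite /threshold_rep; case: (unlift ord0 i) => [j|].
  - by rewrite vertex_coordP // exy implybT.
  - by rewrite threshold_coordP // exy implybT.
have vertex_edge v : v \in ~: S -> (x == v) || (y == v) -> e x y.
  move=> vS; have := cover (lift ord0 (enum_rank_in vS v)).
  by rewrite /threshold_rep liftK enum_rankK_in // vertex_coordP // => /implyP.
have [xS|xS] := boolP (x \in ~: S); first by apply: (vertex_edge x); rewrite ?eqxx.
have [yS|yS] := boolP (y \in ~: S); first by apply: (vertex_edge y); rewrite ?eqxx ?orbT.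
rewrite !inE !negbK in xS yS.
by have := cover ord0; rewrite /threshold_rep unlift_none threshold_coordP // xS yS.
Qed.

End ThresholdExtension.

Lemma threshold_trop_rep (T : finType) (e : rel T) (S : {set T}) :
  symmetric e -> is_threshold_on e S -> has_trop_rep e #|~: S|.+1.
Proof.
move=> e_sym [w [s wS]]; exists (threshold_rep e w s), 1%:R.
split=> [|x y xy]; first exact: ltr01.
by rewrite (threshold_repP e_sym wS xy).
Qed.

Local Close Scope ring_scope.

Theorem mainTheorem11 (T : finType) (e : rel T) (k : nat) :
  simple_graph e ->
  3 <= #|T| ->
  (exists S : {set T}, is_threshold_on e S /\ #|S| = k) ->
  (forall S : {set T}, is_threshold_on e S -> #|S| <= k) ->
  exists d : nat, [/\ 1 <= d, d <= #|T| - k + 1 & has_trop_rep e d].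
Proof.
move=> [e_sym _] _ [S [S_thr <-]] _.
exists #|~: S|.+1; split => //; last exact: threshold_trop_rep.
by rewrite -(cardsC S) addKn addn1.
Qed.
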